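(* Let $B=(B_t)_{t\ge 0}$ be a standard Brownian motion with $B_0=0$ and let $c>0$. Define stopping times $(T_m)_{m\ge 0}$ and a process $U=(U_t)_{t\ge0}$ as follows. On the event $A$ that $B$ reaches $c$ before $-c$: $T_0=\inf\{t\ge0: B_t=c\}$; for $k\ge0$, $T_{2k+1}$ is the first time $t\ge T_{2k}$ with $B_t-\sup_{T_{2k}\le s\le t}B_s=-2c$, and $T_{2k+2}$ is the first time $t\ge T_{2k+1}$ with $B_t-\inf_{T_{2k+1}\le s\le t}B_s=2c$. Set $U_t=0$ for $0\le t\le T_0$; $U_t=\sup_{T_{2k}\le s\le t}B_s-c$ for $T_{2k}<t\le T_{2k+1}$; $U_t=\inf_{T_{2k+1}\le s\le t}B_s+c$ for $T_{2k+1}<t\le T_{2k+2}$ ($k\ge 0$). On the complementary event $A^c$ ($B$ reaches $-c$ before $c$): $T_0=\inf\{t\ge0: B_t=-c\}$; for $k\ge0$, $T_{2k+1}$ is the first time $t\ge T_{2k}$ with $B_t-\inf_{T_{2k}\le s\le t}B_s=2c$, and $T_{2k+2}$ is the first time $t\ge T_{2k+1}$ with $B_t-\sup_{T_{2k+1}\le s\le t}B_s=-2c$. Set $U_t=0$ for $0\le t\le T_0$; $U_t=\inf_{T_{2k}\le s\le t}B_s+c$ for $T_{2k}<t\le T_{2k+1}$; $U_t=\sup_{T_{2k+1}\le s\le t}B_s-c$ for $T_{2k+1}<t\le T_{2k+2}$ ($k\ge0$). Then (almost surely) $U$ is the only continuous process with finite variation satisfying: (a) $U_0=0$; (b) $B_t-c\le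 U_t\le B_t+c$ for all $t\ge0$; (c) $U$ is nondecreasing on every interval on which $U<B+c$ strictly; (d) $U$ is nonincreasing on every interval on which $U>B-c$ strictly. (In particular $U$ is constant on intervals where $B-c<U<B+c$.)
   Context: Here $B_t$ models the logarithm of a reference market price $p=\exp B$, $U_t$ the logarithm of an automated-market-maker price, and $c=\log(\gamma^{-1})$ for a fee parameter $\gamma\in(0,1)$. The stopping times $T_m$ are almost surely finite for every $m$. *)

From HB Require Import structures.
From mathcomp Require Import all_boot all_order all_algebra.
From mathcomp Require Import all_classical all_reals all_analysis.
Set Implicit Arguments. Unset Strict Implicit. Unset Printing Implicit Defensive.
Import Order.TTheory GRing.Theory Num.Theory.
Import numFieldNormedType.Exports.
Local Open Scope classical_set_scope.
Local Open Scope ring_scope.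

Section Defs.
Context {R : realType}.
Implicit Types (b v : R -> R) (c s t : R).

Definition run_sup b s t : R := sup [set b u | u in `[s, t]].
Definition run_inf b s t : R := inf [set b u | u in `[s, t]].

(* first time t >= s (s possibly +oo) at which P t holds; +oo if never *)
Definition first_time (s : \bar R) (P : R -> Prop) : \bar R :=
  ereal_inf [set t%:E | t in [set t : R | (s <= t%:E)%E /\ P t]].

Definition hit b (x : R) : \bar R := first_time 0%E (fun t => b t = x).

Definition drop_time b c (s : \bar R) : \bar R :=
  first_time s (fun t => b t - run_sup b (fine s) t = - (2 * c)).

Definition rise_time b c (s : \bar R) : \bar R :=
  first_time s (fun t => b t - run_inf b (fine s) t = 2 * c).

Definition reach_c_first b c : bool := (hit b c < hit b (- c))%E.

Fixpoint Tseq b c (m : nat) : \bar R :=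
  match m with
  | 0%N => if reach_c_first b c then hit b c else hit b (- c)
  | m'.+1 =>
      if reach_c_first b c then
        (if odd m' then rise_time b c (Tseq b c m') else drop_time b c (Tseq b c m'))
      else
        (if odd m' then drop_time b c (Tseq b c m') else rise_time b c (Tseq b c m'))
  end.

(* value of U on (T_m, T_{m+1}] *)
Definition Upiece b c (m : nat) t : R :=
  let s := fine (Tseq b c m) in
  if reach_c_first b c then
    (if odd m then run_inf b s t + c else run_sup b s t - c)
  else
    (if odd m then run_sup b s t - c else run_inf b s t + c).

Definition Upath b c t : R :=
  if (t%:E <= Tseq b c 0)%E then 0
  else Upiece b c
         (xget 0%N [set m : nat | (Tseq b c m < t%:E)%E /\ (t%:E <= Tseq b c m.+1)%E]) t.

Definition is_solution b c v : Prop :=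
  [/\ {within `[0, +oo[, continuous v} /\
      (forall t, 0 <= t -> bounded_variation 0 t v),
      v 0 = 0,
      (forall t, 0 <= t -> b t - c <= v t <= b t + c),
      (forall I : set R, I `<=` `[0, +oo[ -> is_interval I ->
         (forall t, I t -> v t < b t + c) ->
         forall x y, I x -> I y -> x <= y -> v x <= v y) &
      (forall I : set R, I `<=` `[0, +oo[ -> is_interval I ->
         (forall t, I t -> v t > b t - c) ->
         forall x y, I x -> I y -> x <= y -> v y <= v x)].

End Defs.

(* Standard Brownian motion on a probability space, defined through its
   finite-dimensional distributions: measurable coordinates, a.s. continuous
   paths, B_0 = 0 a.s., and for 0 <= t_0 < t_1 < ... < t_n the increments
   B_{t_(k+1)} - B_{t_k} are independent centred Gaussians of variance
   t_(k+1) - t_k (expressed via the characteristic function, real and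
   imaginary parts). *)
Definition brownian_motion {d : measure_display} {Ω : measurableType d}
  {R : realType} (P : probability Ω R) (B : R -> Ω -> R) : Prop :=
  [/\ (forall t, measurable_fun setT (B t)),
      {ae P, forall w, {within `[0, +oo[, continuous (fun t => B t w)}},
      {ae P, forall w, B 0 w = 0} &
      (forall (n : nat) (t u : nat -> R), 0 <= t 0%N ->
         (forall k, (k < n)%N -> t k < t k.+1) ->
         (\int[P]_w (cos (\sum_(k < n) u k * (B (t k.+1) w - B (t k) w)))%:E
            = (expR (- (\sum_(k < n) u k ^+ 2 * (t k.+1 - t k)) / 2))%:E)%E /\
         (\int[P]_w (sin (\sum_(k < n) u k * (B (t k.+1) w - B (t k) w)))%:E = 0)%E)].

(* The statement is pathwise: of the Brownian motion only the almost sure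
   continuity of the paths and B_0 = 0 are used, together with the assumed
   finiteness of every T_m.  On each piece [T_m, T_(m+1)] the path oscillates by at
   least 2c, so continuity forces T_m to increase to infinity.  On a piece, U
   is either a running supremum minus c (nondecreasing, and constant while b
   stays below its running supremum, i.e. while U > b - c) or symmetrically a
   running infimum plus c; this gives the band condition and (c), (d) piece by
   piece.  These properties glue across the junctions, and so do the bounds
   U_y <= max (U_x, sup_[x,y] b - c) and U_y >= min (U_x, inf_[x,y] b + c),
   which control |U_y - U_x| by the oscillation of b on [x, y]: hence U is
   continuous.
   Uniqueness: if two solutions satisfy v t > w t, let s be the last time
   before t with v <= w.  On ]s, t], w < v <= b + c makes w nondecreasing and
   v > w >= b - c makes v nonincreasing, so v - w is nonincreasing there and by
   right continuity (v - w)(s) >= (v - w)(t) > 0, a contradiction. *)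

From HB Require Import structures.
From mathcomp Require Import all_boot all_order all_algebra.
From mathcomp Require Import all_classical all_reals all_analysis.
From mathcomp Require Import lra.
Set Implicit Arguments. Unset Strict Implicit. Unset Printing Implicit Defensive.
Import Order.TTheory GRing.Theory Num.Theory.
Import numFieldNormedType.Exports.
Local Open Scope classical_set_scope.
Local Open Scope ring_scope.

Section EpsContinuity.
Context {R : realType}.
Implicit Types (A : set R) (f g : R -> R).

Lemma in_itvcyP (s x : R) : `[s, +oo[%classic x <-> s <= x.
Proof. by rewrite /= in_itv /= andbT. Qed.

Definition eps_continuous A f := forall x, A x -> forall e : R, 0 < e ->
  exists2 d : R, 0 < d & forall y, A y -> `|y - x| < d -> `|f y - f x| < e.

Lemma eps_continuousP A f : {within A, continuous f} <-> eps_continuous A f.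
Proof.
split.
- move=> /subspace_continuousP fA x Ax e e0.
  have /cvgrPdist_lt/(_ e e0) := fA x Ax.
  rewrite /prop_near1 /within /= => /nbhs_ballP [d d0 Hd].
  exists d => // y Ay yx; rewrite distrC; apply: Hd => //.
  by rewrite /ball /= distrC.
- move=> fA; apply/subspace_continuousP => x Ax; apply/cvgrPdist_lt => e e0.
  have [d d0 Hd] := fA x Ax e e0.
  rewrite /prop_near1 /within /=; apply/nbhs_ballP; exists d => //= y.
  by rewrite /ball /= => xy Ay; rewrite distrC; apply: Hd; rewrite // distrC.
Qed.

Lemma eps_continuousW A B f : A `<=` B -> eps_continuous B f -> eps_continuous A f.
Proof.
move=> AB fB x Ax e e0; have [d d0 Hd] := fB x (AB x Ax) e e0.
by exists d => // y Ay; apply/Hd/AB.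
Qed.

Lemma eps_continuousN A f : eps_continuous A f -> eps_continuous A (fun t => - f t).
Proof.
move=> fA x Ax e e0; have [d d0 Hd] := fA x Ax e e0; exists d => // y Ay yx.
by rewrite -opprD normrN; apply: Hd.
Qed.

Lemma eps_continuousB A f g : eps_continuous A f -> eps_continuous A g ->
  eps_continuous A (fun t => f t - g t).
Proof.
move=> fA gA x Ax e e0; have e2 : 0 < e / 2 by lra.
have [d1 d10 H1] := fA x Ax _ e2; have [d2 d20 H2] := gA x Ax _ e2.
exists (Num.min d1 d2) => [|y Ay]; first by rewrite lt_min d10 d20.
rewrite lt_min => /andP[y1 y2].
have -> : f y - g y - (f x - g x) = (f y - f x) - (g y - g x) by lra.
by rewrite (le_lt_trans (ler_normB _ _)) // (splitr e) ltrD ?H1 ?H2.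
Qed.

End EpsContinuity.

Section RunningSup.
Context {R : realType}.
Variable b : R -> R.
Hypothesis b_cont : eps_continuous `[0, +oo[ b.

Lemma continuous_within_itv s t : 0 <= s -> {within `[s, t], continuous b}.
Proof.
move=> s0; apply/eps_continuousP; apply: eps_continuousW b_cont => x /=.
by rewrite !in_itv /= andbT => /andP[sx _]; rewrite (le_trans s0 sx).
Qed.

Lemma run_sup_attain s t : 0 <= s -> s <= t -> exists2 u, s <= u <= t &
  run_sup b s t = b u /\ forall v, s <= v <= t -> b v <= b u.
Proof.
move=> s0 st; have [u + bu_max] := EVT_max st (continuous_within_itv s0).
rewrite in_itv /= => su; exists u => //.
have {}bu_max v : s <= v <= t -> b v <= b u by move=> svt; apply: bu_max; rewrite in_itv.
split => //; apply/eqP; rewrite eq_le; apply/andP; split.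
  by apply: ge_sup => [|_ [v /= + <-]]; [exists (b u), u | rewrite in_itv => /bu_max].
apply: ub_le_sup; last by exists u => //=; rewrite in_itv.
by exists (b u) => _ [v /= + <-]; rewrite in_itv => /bu_max.
Qed.

Lemma run_sup_ubound s t v : 0 <= s -> s <= v <= t -> b v <= run_sup b s t.
Proof.
move=> s0 /andP[sv vt]; have [u _ [-> bu_max]] := run_sup_attain s0 (le_trans sv vt).
by apply: bu_max; rewrite sv vt.
Qed.

Lemma ge_run_sup s t M : 0 <= s -> s <= t ->
  (forall v, s <= v <= t -> b v <= M) -> run_sup b s t <= M.
Proof. by move=> s0 st bM; have [u /bM + [-> _]] := run_sup_attain s0 st. Qed.

Lemma run_sup_xx s : 0 <= s -> run_sup b s s = b s.
Proof.
move=> s0; apply/eqP; rewrite eq_le run_sup_ubound ?lexx // andbT.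
by apply: ge_run_sup => // v /andP[sv vs]; rewrite (@le_anti _ _ v s) ?sv ?vs.
Qed.

Lemma run_sup_split s x y : 0 <= s -> s <= x -> x <= y ->
  run_sup b s y = Num.max (run_sup b s x) (run_sup b x y).
Proof.
move=> s0 sx xy; have x0 := le_trans s0 sx.
apply/eqP; rewrite eq_le ge_max; apply/andP; split; last first.
  apply/andP; split; apply: ge_run_sup => //.
  - by move=> v /andP[sv vx]; apply: run_sup_ubound; rewrite // sv (le_trans vx xy).
  - by move=> v /andP[xv vy]; apply: run_sup_ubound; rewrite // vy (le_trans sx xv).
have [u /andP[su uy] [-> _]] := run_sup_attain s0 (le_trans sx xy).
rewrite le_max; have [ux|xu] := leP u x.
  by rewrite run_sup_ubound // su ux.
by rewrite orbC run_sup_ubound // (ltW xu) uy.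
Qed.

Lemma run_sup_increment s p q : 0 <= s -> s <= p -> p <= q ->
  0 <= run_sup b s q - run_sup b s p <= run_sup b p q - b p.
Proof.
move=> s0 sp pq; have p0 := le_trans s0 sp.
have bp_sp : b p <= run_sup b s p by rewrite run_sup_ubound // sp lexx.
have bp_pq : b p <= run_sup b p q by rewrite run_sup_ubound // pq lexx.
rewrite (run_sup_split s0 sp pq); apply/andP.
have [h|h] := leP (run_sup b s p) (run_sup b p q); first by lra.
by rewrite subrr; lra.
Qed.

Lemma run_sup_constant s x y : 0 <= s -> s <= x -> x <= y ->
  (forall t, x <= t <= y -> b t < run_sup b s t) -> run_sup b s y = run_sup b s x.
Proof.
move=> s0 sx xy b_lt; have x0 := le_trans s0 sx.
rewrite (run_sup_split s0 sx xy); apply/max_idPl; rewrite leNgt; apply/negP => lt_xy.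
have [u /andP[xu uy] [bu bu_max]] := run_sup_attain x0 xy.
have bu_at : run_sup b x u = b u.
  apply/le_anti; rewrite run_sup_ubound ?xu ?lexx // andbT.
  by apply: ge_run_sup => // v /andP[xv vu]; rewrite bu_max // xv (le_trans vu uy).
have := b_lt u; rewrite xu uy => /(_ isT).
rewrite (run_sup_split s0 sx xu) bu_at -bu lt_max ltxx orbF.
by move=> /(lt_trans lt_xy); rewrite ltxx.
Qed.

End RunningSup.

Lemma run_infE {R : realType} (b : R -> R) s t :
  run_inf b s t = - run_sup (fun u => - b u) s t.
Proof. by rewrite /run_inf /inf /run_sup image_comp. Qed.

Section RunningInf.
Context {R : realType}.
Variable b : R -> R.
Hypothesis b_cont : eps_continuous `[0, +oo[ b.
Let bN_cont : eps_continuous `[0, +oo[ (fun u => - b u) := eps_continuousN b_cont.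

Lemma run_inf_lbound s t v : 0 <= s -> s <= v <= t -> run_inf b s t <= b v.
Proof. by move=> s0 svt; rewrite run_infE lerNl (run_sup_ubound bN_cont). Qed.

Lemma le_run_inf s t M : 0 <= s -> s <= t ->
  (forall v, s <= v <= t -> M <= b v) -> M <= run_inf b s t.
Proof.
by move=> s0 st Mb; rewrite run_infE lerNr (ge_run_sup bN_cont) // => v /Mb; rewrite lerN2.
Qed.

Lemma run_inf_xx s : 0 <= s -> run_inf b s s = b s.
Proof. by move=> s0; rewrite run_infE run_sup_xx // opprK. Qed.

Lemma run_inf_split s x y : 0 <= s -> s <= x -> x <= y ->
  run_inf b s y = Num.min (run_inf b s x) (run_inf b x y).
Proof.
move=> s0 sx xy; rewrite !run_infE (run_sup_split bN_cont s0 sx xy).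
by rewrite oppr_max.
Qed.

Lemma run_inf_increment s p q : 0 <= s -> s <= p -> p <= q ->
  run_inf b p q - b p <= run_inf b s q - run_inf b s p <= 0.
Proof.
move=> s0 sp pq; have := run_sup_increment bN_cont s0 sp pq.
by rewrite !run_infE; lra.
Qed.

Lemma run_inf_constant s x y : 0 <= s -> s <= x -> x <= y ->
  (forall t, x <= t <= y -> run_inf b s t < b t) -> run_inf b s y = run_inf b s x.
Proof.
move=> s0 sx xy lt_b; rewrite !run_infE; congr (- _).
by apply: (run_sup_constant bN_cont s0 sx xy) => t /lt_b; rewrite run_infE ltrNl.
Qed.

Lemma oscillation_near x e : 0 <= x -> 0 < e -> exists2 d, 0 < d &
  forall p q, 0 <= p -> p <= q -> `|p - x| < d -> `|q - x| < d ->
    run_sup b p q - run_inf b p q < e.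
Proof.
move=> x0 e0; have e4 : 0 < e / 4 by lra.
have [d d0 b_near] := b_cont (proj2 (in_itvcyP 0 x) x0) e4.
exists d => // p q p0 pq; rewrite ![`|_ - x| < d]ltr_distlC => /andP[px1 px2] /andP[qx1 qx2].
have b_band v : p <= v <= q -> b x - e / 4 <= b v <= b x + e / 4.
  move=> /andP[pv vq]; have : `|b v - b x| < e / 4.
    by apply: b_near; [apply/in_itvcyP; lra | rewrite ltr_distlC; apply/andP; lra].
  by rewrite ltr_distlC => /andP[]; lra.
have : run_sup b p q <= b x + e / 4 by apply: ge_run_sup => // v /b_band /andP[].
have : b x - e / 4 <= run_inf b p q by apply: le_run_inf => // v /b_band /andP[].
by lra.
Qed.

Lemma eps_continuous_oscillation (F : R -> R) s : 0 <= s ->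
  (forall p q, s <= p -> p <= q -> `|F q - F p| <= run_sup b p q - run_inf b p q) ->
  eps_continuous `[s, +oo[ F.
Proof.
move=> s0 F_osc x /in_itvcyP sx e e0.
have [d d0 osc_small] := oscillation_near (le_trans s0 sx) e0.
have F_near p q : s <= p -> p <= q -> `|p - x| < d -> `|q - x| < d -> `|F q - F p| < e.
  move=> sp pq px qx; apply: le_lt_trans (F_osc p q sp pq) _.
  exact: osc_small (le_trans s0 sp) pq px qx.
exists d => // y /in_itvcyP sy yx.
have [xy|/ltW yx'] := leP x y; first by rewrite F_near ?subrr ?normr0.
by rewrite distrC F_near ?subrr ?normr0.
Qed.

Lemma run_sup_continuous s : 0 <= s -> eps_continuous `[s, +oo[ (run_sup b s).
Proof.
move=> s0; apply: eps_continuous_oscillation => // p q sp pq.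
have /andP[inc_ge0 inc_le] := run_sup_increment b_cont s0 sp pq.
have : run_inf b p q <= b p by rewrite run_inf_lbound ?lexx ?(le_trans s0 sp).
by rewrite ger0_norm //; lra.
Qed.

Lemma run_inf_continuous s : 0 <= s -> eps_continuous `[s, +oo[ (run_inf b s).
Proof.
move=> s0; apply: eps_continuous_oscillation => // p q sp pq.
have /andP[inc_ge inc_le0] := run_inf_increment s0 sp pq.
have : b p <= run_sup b p q by rewrite run_sup_ubound ?lexx ?(le_trans s0 sp).
by rewrite ler0_norm //; lra.
Qed.

End RunningInf.

Section FirstTime.
Context {R : realType}.
Implicit Types (g : R -> R) (P : R -> Prop).

Lemma first_time_ge (s : \bar R) P : (s <= first_time s P)%E.
Proof. by apply: le_ereal_inf_tmp => _ [t [st _] <-]. Qed.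

Lemma first_timeP s tau P : first_time s%:E P = tau%:E ->
  [/\ s <= tau, (forall t, s <= t -> P t -> tau <= t) &
     (forall e, 0 < e -> exists t, [/\ s <= t, P t & t < tau + e])].
Proof.
move=> E; split.
- by rewrite -lee_fin -E first_time_ge.
- move=> t st Pt; rewrite -lee_fin -E; apply: ereal_inf_lbound.
  by exists t => //; rewrite lee_fin.
- move=> e e0; have : (first_time s%:E P < (tau + e)%:E)%E by rewrite E lte_fin; lra.
  move=> /ereal_inf_lt[_ [t [st Pt] <-]]; rewrite lte_fin => te.
  by exists t; split => //; rewrite -lee_fin.
Qed.

Lemma ivt_down g s t v : eps_continuous `[s, +oo[ g -> s <= t -> g t <= v -> v <= g s ->
  exists2 u, s <= u <= t & g u = v.
Proof.
move=> g_cont st gtv vgs.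
have g_st : {within `[s, t], continuous g}.
  apply/eps_continuousP; apply: eps_continuousW g_cont => x /=.
  by rewrite !in_itv /= andbT => /andP[].
have : Num.min (g s) (g t) <= v <= Num.max (g s) (g t).
  by rewrite ge_min le_max gtv vgs orbT.
by move=> /(IVT st g_st)[u]; rewrite in_itv /= => sut gu; exists u.
Qed.

Section LevelHitting.
Variables (g : R -> R) (s v tau : R).
Hypothesis g_cont : eps_continuous `[s, +oo[ g.
Hypothesis tau_def : first_time s%:E (fun t => g t = v) = tau%:E.

Lemma first_time_level : g tau = v.
Proof.
have [s_tau tau_min tau_adh] := first_timeP tau_def.
apply/eqP/negPn/negP => ne; have e0 : 0 < `|g tau - v| by rewrite normr_gt0 subr_eq0.
have [d d0 g_near] := g_cont (proj2 (in_itvcyP s tau) s_tau) e0.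
have [t [st gt td]] := tau_adh d d0.
have t_near : `|t - tau| < d by rewrite ger0_norm ?subr_ge0 ?tau_min //; lra.
by have := g_near t (proj2 (in_itvcyP s t) st) t_near; rewrite gt distrC ltxx.
Qed.

Lemma first_time_gt : g s <> v -> s < tau.
Proof.
have [s_tau _ _] := first_timeP tau_def.
by rewrite lt_neqAle s_tau andbT => gs; apply/eqP => st; apply: gs; rewrite st first_time_level.
Qed.

Lemma first_time_above : v < g s -> forall t, s <= t <= tau -> v <= g t.
Proof.
have [_ tau_min _] := first_timeP tau_def.
move=> vgs t /andP[st t_tau]; rewrite leNgt; apply/negP => gtv.
have [u /andP[su ut] gu] := ivt_down g_cont st (ltW gtv) (ltW vgs).
have tu := tau_min u su gu.
by move: gtv; rewrite (@le_anti _ _ t u) ?ut ?(le_trans t_tau tu) // gu ltxx.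
Qed.

End LevelHitting.

Lemma first_time_below g s v tau : eps_continuous `[s, +oo[ g ->
  first_time s%:E (fun t => g t = v) = tau%:E -> g s < v ->
  forall t, s <= t <= tau -> g t <= v.
Proof.
move=> g_cont tau_def gsv t stt; rewrite -lerN2.
apply: (first_time_above (eps_continuousN g_cont) _ _ stt); last by rewrite ltrN2.
by rewrite -tau_def; congr first_time; apply/funext => u; apply/propext; split => h; lra.
Qed.

Lemma hit_before (b : R -> R) x y tau : eps_continuous `[0, +oo[ b -> b 0 = 0 ->
  y < 0 < x -> hit b x = tau%:E -> (hit b x <= hit b y)%E ->
  [/\ 0 <= tau, b tau = x & forall t, 0 <= t <= tau -> y <= b t <= x].
Proof.
move=> b_cont b0 /andP[y0 x0] tau_def hit_xy.
have [tau0 _ _] := first_timeP tau_def.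
split => // [|t /andP[t0 t_tau]]; first exact: first_time_level tau_def.
rewrite (first_time_below b_cont tau_def) ?b0 ?t0 // andbT leNgt; apply/negP => bty.
have y_b0 : y <= b 0 by rewrite b0 ltW.
have [u /andP[u0 ut] bu] := ivt_down b_cont t0 (ltW bty) y_b0.
have hit_y_u : (hit b y <= u%:E)%E.
  by apply: ereal_inf_lbound; exists u => //; split; rewrite ?lee_fin.
have : (tau%:E <= u%:E)%E by rewrite -tau_def (le_trans hit_xy hit_y_u).
rewrite lee_fin => tau_u; have ut' : u = tau by apply: le_anti; rewrite (le_trans ut t_tau).
by move: bu; rewrite ut' (first_time_level b_cont tau_def) => xy; lra.
Qed.
End FirstTime.

Lemma piecewise_ind {R : realType} (tau : nat -> R) (Q : R -> R -> Prop) :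
  (forall m, tau m <= tau m.+1) -> (forall y, exists m, y <= tau m) ->
  (forall x z y, 0 <= x -> x <= z -> z <= y -> Q x z -> Q z y -> Q x y) ->
  (forall x y, 0 <= x -> x <= y -> y <= tau 0%N -> Q x y) ->
  (forall m x y, tau m <= x -> x <= y -> y <= tau m.+1 -> Q x y) ->
  forall x y, 0 <= x -> x <= y -> Q x y.
Proof.
move=> tau_mono tau_unbounded Q_trans Q_init Q_piece.
suff Q_upto n x y : 0 <= x -> x <= y -> y <= tau n -> Q x y.
  by move=> x y x0 xy; have [m ym] := tau_unbounded y; exact: (Q_upto m).
elim: n x y => [|n IH] x y x0 xy yn; first exact: Q_init.
have [yn'|/ltW ny] := leP y (tau n); first exact: IH.
have [nx|/ltW xn] := leP (tau n) x; first exact: (Q_piece n).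
by apply: (Q_trans x (tau n) y) => //; [exact: IH | exact: Q_piece].
Qed.

Lemma nonincreasing_bounded_variation {R : realType} a b (f : R -> R) :
  {in `[a, b] &, {homo f : x y /~ x <= y}} -> bounded_variation a b f.
Proof.
move=> f_decr; have -> : f = \- (\- f) by apply/funext => x /=; rewrite opprK.
apply/bounded_variationN/nondecreasing_bounded_variation => x y xab yab xy /=.
by rewrite lerN2 f_decr.
Qed.

Section ReflectedPath.
Context {R : realType}.
Variables (b : R -> R) (c : R).
Hypothesis c_gt0 : 0 < c.
Hypothesis b_cont : eps_continuous `[0, +oo[ b.
Hypothesis b0 : b 0 = 0.
Hypothesis T_finite : forall m, (Tseq b c m < +oo)%E.

Definition tau m := fine (Tseq b c m).

(* On [[T_m, T_(m+1)]], U is the running supremum minus c when [upward m] and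
   the running infimum plus c otherwise. *)
Definition upward m : bool := reach_c_first b c == ~~ odd m.

Lemma Tseq_S m : Tseq b c m.+1 =
  if upward m then drop_time b c (Tseq b c m) else rise_time b c (Tseq b c m).
Proof. by rewrite /upward /=; case: (reach_c_first b c); case: (odd m). Qed.

Lemma upward_S m : upward m.+1 = ~~ upward m.
Proof. by rewrite /upward /=; case: (reach_c_first b c); case: (odd m). Qed.

Lemma Tseq_ge0 m : (0 <= Tseq b c m)%E.
Proof.
elim: m => [|m IH]; first by rewrite /=; case: ifP => _; exact: first_time_ge.
by rewrite Tseq_S; case: ifP => _; apply: le_trans IH _; exact: first_time_ge.
Qed.

Lemma Tseq_tau m : Tseq b c m = (tau m)%:E.
Proof. by rewrite /tau; move: (T_finite m) (Tseq_ge0 m); case: (Tseq b c m). Qed.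

Lemma tau_ge0 m : 0 <= tau m.
Proof. by have := Tseq_ge0 m; rewrite Tseq_tau lee_fin. Qed.

Lemma tau0_hit : b (tau 0) = (if reach_c_first b c then c else - c) /\
  forall t, 0 <= t <= tau 0 -> - c <= b t <= c.
Proof.
have T0 : (if reach_c_first b c then hit b c else hit b (- c)) = (tau 0)%:E := Tseq_tau 0.
have c_bounds : - c < 0 < c by rewrite oppr_lt0 c_gt0.
case: ifP T0 => c_first T0.
  by have [] := hit_before b_cont b0 c_bounds T0 (ltW c_first).
have hitN x : hit (fun t => - b t) x = hit b (- x).
  by congr first_time; apply/funext => t; apply/propext; split => h; lra.
have bN0 : - b 0 = 0 by rewrite b0 oppr0.
have T0N : hit (fun t => - b t) c = (tau 0)%:E by rewrite hitN.
have hitN_le : (hit (fun t => (- b t)%R) c <= hit (fun t => (- b t)%R) (- c)%R)%E.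
  by move: c_first; rewrite !hitN opprK leNgt /reach_c_first => ->.
have [_ bT bN_bounds] := hit_before (eps_continuousN b_cont) bN0 c_bounds T0N hitN_le.
split; first by lra.
by move=> t /bN_bounds /andP[]; lra.
Qed.

Definition drawdown m t := b t - run_sup b (tau m) t.
Definition drawup m t := b t - run_inf b (tau m) t.

Lemma piece_upward m : upward m ->
  [/\ tau m < tau m.+1, drawdown m (tau m.+1) = - (2 * c)
    & forall t, tau m <= t <= tau m.+1 -> - (2 * c) <= drawdown m t].
Proof.
move=> up_m; have tau_m0 := tau_ge0 m.
have dd_cont : eps_continuous `[tau m, +oo[ (drawdown m).
  apply: eps_continuousB (run_sup_continuous b_cont tau_m0).
  by apply: eps_continuousW b_cont => t /in_itvcyP tm_t; apply/in_itvcyP; lra.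
have T_def : first_time (tau m)%:E (fun t => drawdown m t = - (2 * c)) = (tau m.+1)%:E.
  by rewrite -[(tau m.+1)%:E]Tseq_tau Tseq_S up_m /drop_time Tseq_tau.
have dd_start : drawdown m (tau m) = 0 by rewrite /drawdown run_sup_xx ?subrr.
have neg_2c : - (2 * c) < 0 by move: c_gt0; lra.
split.
- by apply: (first_time_gt dd_cont T_def); rewrite dd_start => /eqP; rewrite gt_eqF.
- exact: first_time_level dd_cont T_def.
- by apply: (first_time_above dd_cont T_def); rewrite dd_start.
Qed.

Lemma piece_downward m : ~~ upward m ->
  [/\ tau m < tau m.+1, drawup m (tau m.+1) = 2 * c
    & forall t, tau m <= t <= tau m.+1 -> drawup m t <= 2 * c].
Proof.
move=> down_m; have tau_m0 := tau_ge0 m.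
have du_cont : eps_continuous `[tau m, +oo[ (drawup m).
  apply: eps_continuousB (run_inf_continuous b_cont tau_m0).
  by apply: eps_continuousW b_cont => t /in_itvcyP tm_t; apply/in_itvcyP; lra.
have T_def : first_time (tau m)%:E (fun t => drawup m t = 2 * c) = (tau m.+1)%:E.
  by rewrite -[(tau m.+1)%:E]Tseq_tau Tseq_S (negbTE down_m) /rise_time Tseq_tau.
have du_start : drawup m (tau m) = 0 by rewrite /drawup run_inf_xx ?subrr.
have pos_2c : 0 < 2 * c by move: c_gt0; lra.
split.
- by apply: (first_time_gt du_cont T_def); rewrite du_start => /eqP; rewrite lt_eqF.
- exact: first_time_level du_cont T_def.
- by apply: (first_time_below du_cont T_def); rewrite du_start.
Qed.

Lemma tau_lt m : tau m < tau m.+1.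
Proof. by case: (boolP (upward m)) => [/piece_upward|/piece_downward] []. Qed.

Lemma tau_le i j : (i <= j)%N -> tau i <= tau j.
Proof.
move=> /subnK <-; elim: (j - i)%N => [|k IH]; first by rewrite add0n.
by rewrite addSn (le_trans IH) ?ltW ?tau_lt.
Qed.

Lemma piece_oscillation m :
  2 * c <= run_sup b (tau m) (tau m.+1) - run_inf b (tau m) (tau m.+1).
Proof.
have tau_m0 := tau_ge0 m; have tau_mS := ltW (tau_lt m).
have lo : run_inf b (tau m) (tau m.+1) <= b (tau m.+1) by rewrite run_inf_lbound ?tau_mS ?lexx.
have hi : b (tau m.+1) <= run_sup b (tau m) (tau m.+1) by rewrite run_sup_ubound ?tau_mS ?lexx.
case: (boolP (upward m)) => [/piece_upward|/piece_downward] [_].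
  by rewrite /drawdown; lra.
by rewrite /drawup; lra.
Qed.

(* A bounded [tau] would converge, and b could not oscillate by 2c near the limit. *)
Lemma tau_unbounded y : exists m, y <= tau m.
Proof.
apply/not_existsP => tau_lt_y; have {}tau_lt_y m : tau m < y by rewrite ltNge; apply/negP.
pose E := [set tau m | m in [set: nat]].
have E_sup : has_sup E by split; [exists (tau 0), 0%N | exists y => _ [m _ <-]; exact/ltW].
have tau_le_sup m : tau m <= sup E by apply: ub_le_sup (proj2 E_sup) _ _; exists m.
have sup0 : 0 <= sup E := le_trans (tau_ge0 0) (tau_le_sup 0%N).
have [d d0 osc_small] := oscillation_near b_cont sup0 c_gt0.
have [_ [m _ <-] near_m] := sup_adherent d0 E_sup.
have near p : sup E - d < p -> p <= sup E -> `|p - sup E| < d.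
  by move=> lo hi; rewrite ler0_norm ?subr_le0 //; lra.
have := osc_small _ _ (tau_ge0 m) (ltW (tau_lt m)) (near _ near_m (tau_le_sup m))
  (near _ (lt_trans near_m (tau_lt m)) (tau_le_sup m.+1)).
by have := piece_oscillation m; move: c_gt0; lra.
Qed.

Local Notation U := (Upath b c).

Lemma Upiece_E m t : Upiece b c m t =
  if upward m then run_sup b (tau m) t - c else run_inf b (tau m) t + c.
Proof. by rewrite /Upiece /upward /tau; case: (reach_c_first b c); case: (odd m). Qed.

Lemma Upath_init t : t <= tau 0 -> U t = 0.
Proof. by move=> t_T0; rewrite /Upath Tseq_tau lee_fin t_T0. Qed.

Lemma Upath_open m t : tau m < t <= tau m.+1 -> U t = Upiece b c m t.
Proof.
move=> /andP[Tm_t t_TS]; have T0_t : tau 0 < t by apply: le_lt_trans Tm_t; apply: tau_le.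
rewrite /Upath Tseq_tau lee_fin (lt_geF T0_t); congr Upiece.
apply: xget_unique => [|n]; first by split; rewrite Tseq_tau ?lte_fin ?lee_fin.
move=> []; rewrite !Tseq_tau lte_fin lee_fin => Tn_t t_TnS.
case: (ltngtP n m) => [/tau_le|/tau_le|//] T_le; exfalso.
- by move: T_le t_TnS Tm_t; lra.
- by move: T_le t_TS Tn_t; lra.
Qed.

Lemma Upiece_start : Upiece b c 0 (tau 0) = 0.
Proof.
have [bT0 _] := tau0_hit; have T00 := tau_ge0 0.
rewrite Upiece_E run_sup_xx // run_inf_xx // bT0 /upward.
by case: (reach_c_first b c) => /=; rewrite ?subrr ?addNr.
Qed.

Lemma Upiece_junction m : Upiece b c m.+1 (tau m.+1) = Upiece b c m (tau m.+1).
Proof.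
have TS0 := tau_ge0 m.+1; rewrite !Upiece_E upward_S.
case: (boolP (upward m)) => [/piece_upward|/piece_downward] [_ T_def _] /=.
  by rewrite run_inf_xx //; move: T_def; rewrite /drawdown; lra.
by rewrite run_sup_xx //; move: T_def; rewrite /drawup; lra.
Qed.

Lemma Upath_piece m t : tau m <= t -> t <= tau m.+1 -> U t = Upiece b c m t.
Proof.
move=> Tm_t t_TS; have [Tm_lt_t|t_le_Tm] := ltP (tau m) t.
  by apply: Upath_open; rewrite Tm_lt_t t_TS.
have -> : t = tau m by apply: le_anti; rewrite t_le_Tm Tm_t.
case: m {Tm_t t_TS t_le_Tm} => [|m]; first by rewrite Upath_init // Upiece_start.
by rewrite Upiece_junction (@Upath_open m) // tau_lt lexx.
Qed.

Section Piece.
Variables (m : nat) (x y : R).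
Hypotheses (Tm_x : tau m <= x) (xy : x <= y) (y_TS : y <= tau m.+1).
Let Tm0 := tau_ge0 m.
Let Ux : U x = Upiece b c m x := Upath_piece Tm_x (le_trans xy y_TS).
Let Uy : U y = Upiece b c m y := Upath_piece (le_trans Tm_x xy) y_TS.
Let Ut t : x <= t <= y -> U t = Upiece b c m t.
Proof. by move=> /andP[xt ty]; apply: Upath_piece; [exact: le_trans xt | exact: le_trans y_TS]. Qed.

Lemma Upath_piece_monotone : if upward m then U x <= U y else U y <= U x.
Proof.
rewrite Ux Uy !Upiece_E; case: (upward m); rewrite lerD2r.
  by rewrite (run_sup_split b_cont Tm0 Tm_x xy) le_max lexx.
by rewrite (run_inf_split b_cont Tm0 Tm_x xy) ge_min lexx.
Qed.

Lemma Upath_piece_le_max : U y <= Num.max (U x) (run_sup b x y - c).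
Proof.
have := Upath_piece_monotone; case: ifPn => up_m mono; last by rewrite le_max mono.
by rewrite Ux Uy !Upiece_E up_m (run_sup_split b_cont Tm0 Tm_x xy) addr_maxl.
Qed.

Lemma Upath_piece_ge_min : Num.min (U x) (run_inf b x y + c) <= U y.
Proof.
have := Upath_piece_monotone; case: ifPn => up_m mono; first by rewrite ge_min mono.
by rewrite Ux Uy !Upiece_E (negbTE up_m) (run_inf_split b_cont Tm0 Tm_x xy) addr_minl.
Qed.

Lemma Upath_piece_nondecreasing : (forall t, x <= t <= y -> U t < b t + c) -> U x <= U y.
Proof.
move=> U_lt; have := Upath_piece_monotone; case: ifPn => // up_m _.
rewrite Ux Uy !Upiece_E (negbTE up_m) (run_inf_constant b_cont Tm0 Tm_x xy) // => t xty.
by have := U_lt t xty; rewrite Ut // Upiece_E (negbTE up_m); lra.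
Qed.

Lemma Upath_piece_nonincreasing : (forall t, x <= t <= y -> b t - c < U t) -> U y <= U x.
Proof.
move=> U_gt; have := Upath_piece_monotone; case: ifPn => // up_m _.
rewrite Ux Uy !Upiece_E up_m (run_sup_constant b_cont Tm0 Tm_x xy) // => t xty.
by have := U_gt t xty; rewrite Ut // Upiece_E up_m; lra.
Qed.

End Piece.

Lemma tau_ind (Q : R -> R -> Prop) :
  (forall x z y, 0 <= x -> x <= z -> z <= y -> Q x z -> Q z y -> Q x y) ->
  (forall x y, 0 <= x -> x <= y -> y <= tau 0%N -> Q x y) ->
  (forall m x y, tau m <= x -> x <= y -> y <= tau m.+1 -> Q x y) ->
  forall x y, 0 <= x -> x <= y -> Q x y.
Proof. exact: piecewise_ind (fun m => ltW (tau_lt m)) tau_unbounded. Qed.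

Lemma Upath_bounds t : 0 <= t -> b t - c <= U t <= b t + c.
Proof.
move=> t0; apply: (@tau_ind (fun _ y => b y - c <= U y <= b y + c) _ _ _ t t) => //.
- move=> x y x0 xy y_T0; have [_ b_bounds] := tau0_hit.
  move: (b_bounds y); rewrite (le_trans x0 xy) y_T0 Upath_init // => /(_ isT) /andP[lo hi].
  by apply/andP; lra.
- move=> m x y Tm_x xy y_TS; have Tm_y := le_trans Tm_x xy; have Tm0 := tau_ge0 m.
  rewrite (Upath_piece Tm_y y_TS) Upiece_E; apply/andP.
  case: (boolP (upward m)) => [/piece_upward|/piece_downward] [_ _ gap].
    have := gap y; rewrite Tm_y y_TS /drawdown => /(_ isT).
    have : b y <= run_sup b (tau m) y by rewrite run_sup_ubound ?Tm_y ?lexx.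
    by lra.
  have := gap y; rewrite Tm_y y_TS /drawup => /(_ isT).
  have : run_inf b (tau m) y <= b y by rewrite run_inf_lbound ?Tm_y ?lexx.
  by lra.
Qed.

Lemma Upath_le_max x y : 0 <= x -> x <= y -> U y <= Num.max (U x) (run_sup b x y - c).
Proof.
move: x y; apply: (@tau_ind (fun x y => U y <= Num.max (U x) (run_sup b x y - c)))
  => [x z y x0 xz zy Uxz Uzy | x y _ xy y_T0 | m]; last first.
- exact: Upath_piece_le_max.
- by rewrite !Upath_init ?(le_trans xy) // le_max lexx.
rewrite (run_sup_split b_cont x0 xz zy) addr_maxl maxA.
by apply: le_trans Uzy _; apply: le_max2.
Qed.

Lemma Upath_ge_min x y : 0 <= x -> x <= y -> Num.min (U x) (run_inf b x y + c) <= U y.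
Proof.
move: x y; apply: (@tau_ind (fun x y => Num.min (U x) (run_inf b x y + c) <= U y))
  => [x z y x0 xz zy Uxz Uzy | x y _ xy y_T0 | m]; last first.
- exact: Upath_piece_ge_min.
- by rewrite !Upath_init ?(le_trans xy) // ge_min lexx.
rewrite (run_inf_split b_cont x0 xz zy) addr_minl minA.
by apply: le_trans _ Uzy; apply: le_min2.
Qed.

Lemma Upath_increment x y : 0 <= x -> x <= y ->
  `|U y - U x| <= run_sup b x y - run_inf b x y.
Proof.
move=> x0 xy; have /andP[Ux_lo Ux_hi] := Upath_bounds x0.
have xxy : x <= x <= y by rewrite lexx xy.
have := run_sup_ubound b_cont x0 xxy; have := run_inf_lbound b_cont x0 xxy.
have := Upath_le_max x0 xy; have := Upath_ge_min x0 xy.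
by rewrite ler_norml ge_min le_max => /orP[] ? /orP[] ? ? ?; apply/andP; lra.
Qed.

Lemma Upath_continuous : eps_continuous `[0, +oo[ U.
Proof. by apply: (eps_continuous_oscillation b_cont (lexx 0)) => p q; exact: Upath_increment. Qed.

Lemma Upath_nondecreasing (I : set R) : I `<=` `[0, +oo[ -> is_interval I ->
  (forall t, I t -> U t < b t + c) -> forall x y, I x -> I y -> x <= y -> U x <= U y.
Proof.
move=> I0 I_itv U_lt x y Ix Iy xy; have x0 : 0 <= x by apply/in_itvcyP/I0.
move: Ix Iy; apply: (@tau_ind (fun x y => I x -> I y -> U x <= U y)) => //.
- move=> x' z y' _ xz zy Uxz Uzy Ix Iy; have Iz : I z by apply: (I_itv x' y'); rewrite ?xz.
  exact: le_trans (Uxz Ix Iz) (Uzy Iz Iy).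
- by move=> x' y' _ x'y' y_T0 _ _; rewrite !Upath_init ?(le_trans x'y').
- move=> m x' y' Tm_x x'y' y_TS Ix Iy; apply: (Upath_piece_nondecreasing Tm_x x'y' y_TS) => t xty.
  by apply: U_lt; apply: (I_itv x' y').
Qed.

Lemma Upath_nonincreasing (I : set R) : I `<=` `[0, +oo[ -> is_interval I ->
  (forall t, I t -> b t - c < U t) -> forall x y, I x -> I y -> x <= y -> U y <= U x.
Proof.
move=> I0 I_itv U_gt x y Ix Iy xy; have x0 : 0 <= x by apply/in_itvcyP/I0.
move: Ix Iy; apply: (@tau_ind (fun x y => I x -> I y -> U y <= U x)) => //.
- move=> x' z y' _ xz zy Uxz Uzy Ix Iy; have Iz : I z by apply: (I_itv x' y'); rewrite ?xz.
  exact: le_trans (Uzy Iz Iy) (Uxz Ix Iz).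
- by move=> x' y' _ x'y' y_T0 _ _; rewrite !Upath_init ?(le_trans x'y').
- move=> m x' y' Tm_x x'y' y_TS Ix Iy; apply: (Upath_piece_nonincreasing Tm_x x'y' y_TS) => t xty.
  by apply: U_gt; apply: (I_itv x' y').
Qed.

Lemma Upath_bounded_variation t : 0 <= t -> bounded_variation 0 t U.
Proof.
apply: (@tau_ind (fun x y => bounded_variation x y U)) => //.
- move=> x z y _ xz zy bv_xz bv_zy; have xy := le_trans xz zy.
  apply/(bounded_variationP _ xy); rewrite (total_variationD _ xz zy) fin_numD.
  by rewrite (bounded_variationP _ xz).1 // (bounded_variationP _ zy).1.
- move=> x y _ xy y_T0; apply: nondecreasing_bounded_variation => u v.
  rewrite !in_itv /= => /andP[_ uy] /andP[_ vy] _.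
  by rewrite !Upath_init ?(le_trans uy) ?(le_trans vy).
- move=> m x y Tm_x xy y_TS.
  have mono u v : u \in `[x, y] -> v \in `[x, y] -> u <= v ->
      if upward m then U u <= U v else U v <= U u.
    rewrite !in_itv /= => /andP[xu uy] /andP[xv vy] uv.
    exact: Upath_piece_monotone (le_trans Tm_x xu) uv (le_trans vy y_TS).
  case: (boolP (upward m)) => up_m.
    by apply: nondecreasing_bounded_variation => u v xu xv uv; move: (mono u v xu xv uv); rewrite up_m.
  apply: nonincreasing_bounded_variation => u v xu xv vu.
  by move: (mono v u xv xu vu); rewrite (negbTE up_m).
Qed.

Lemma Upath_solution : is_solution b c U.
Proof.
split; [split | | exact: Upath_bounds | exact: Upath_nondecreasing
              | exact: Upath_nonincreasing].
- exact/eps_continuousP/Upath_continuous.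
- exact: Upath_bounded_variation.
- exact/Upath_init/tau_ge0.
Qed.

End ReflectedPath.

Section CrossingTimes.
Context {R : realType}.
Variable g : R -> R.
Hypothesis g_cont : eps_continuous `[0, +oo[ g.

Lemma last_nonpositive_time t : 0 <= t -> g 0 <= 0 -> 0 < g t ->
  exists s, [/\ 0 <= s, s < t, g s <= 0 & forall r, s < r <= t -> 0 < g r].
Proof.
move=> t0 g0 gt_pos; pose A := [set r | 0 <= r <= t /\ g r <= 0].
have A0 : A 0 by split; rewrite ?lexx ?t0.
have A_le_t r : A r -> r <= t by case=> /andP[].
have A_sup : has_sup A by split; [exists 0 | exists t].
have A_ub r : A r -> r <= sup A by move=> Ar; apply: ub_le_sup (proj2 A_sup) _ Ar.
have s0 : 0 <= sup A := A_ub 0 A0.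
have g_pos r : sup A < r <= t -> 0 < g r.
  move=> /andP[sr rt]; rewrite ltNge; apply/negP => gr_le0.
  have : r <= sup A by apply: A_ub; split; rewrite // rt (le_trans s0 (ltW sr)).
  by rewrite leNgt sr.
have gs_le0 : g (sup A) <= 0.
  rewrite leNgt; apply/negP => gs_pos.
  have [d d0 g_near] := g_cont (proj2 (in_itvcyP 0 _) s0) gs_pos.
  have [a Aa sa] := sup_adherent d0 A_sup; have [/andP[a0 _] ga] := Aa.
  have a_near : `|a - sup A| < d by rewrite ler0_norm ?subr_le0 ?A_ub //; lra.
  have := g_near a (proj2 (in_itvcyP 0 a) a0) a_near.
  by rewrite ltr_distlC => /andP[]; lra.
exists (sup A); split => //; rewrite lt_neqAle.
have st : sup A <= t by apply: ge_sup; first exists 0.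
by rewrite st andbT; apply: contraTneq gs_le0 => ->; rewrite -ltNge.
Qed.

Lemma ge_right_limit s t M : 0 <= s -> s < t ->
  (forall r, s < r <= t -> M <= g r) -> M <= g s.
Proof.
move=> s0 st M_le; rewrite leNgt; apply/negP => gs_lt; have e0 : 0 < M - g s by lra.
have [d d0 g_near] := g_cont (proj2 (in_itvcyP 0 s) s0) e0.
pose r := Num.min t (s + d / 2).
have s_r : s < r by rewrite /r lt_min st /=; lra.
have r_t : r <= t by rewrite /r ge_min lexx.
have r_near : `|r - s| < d.
  have : r <= s + d / 2 by rewrite /r ge_min lexx orbT.
  by rewrite gtr0_norm ?subr_gt0 //; lra.
have := g_near r (proj2 (in_itvcyP 0 r) (le_trans s0 (ltW s_r))) r_near.
have := M_le r; rewrite s_r r_t => /(_ isT).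
by rewrite ltr_distlC => ? /andP[]; lra.
Qed.

End CrossingTimes.

Section Uniqueness.
Context {R : realType}.
Variables (b : R -> R) (c : R) (v w : R -> R).
Hypotheses (v_sol : is_solution b c v) (w_sol : is_solution b c w).

Lemma solution_gap_nonincreasing (I : set R) : I `<=` `[0, +oo[ -> is_interval I ->
  (forall t, I t -> w t < v t) ->
  forall x y, I x -> I y -> x <= y -> v y - w y <= v x - w x.
Proof.
have [_ _ v_bounds _ v_decr] := v_sol; have [_ _ w_bounds w_incr _] := w_sol.
move=> I0 I_itv w_lt_v x y Ix Iy xy.
have t0 t : I t -> 0 <= t by move/I0/in_itvcyP.
have vy_le : v y <= v x.
  apply: (v_decr I) => // t It; have /andP[w_lo _] := w_bounds t (t0 t It).
  by have := w_lt_v t It; lra.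
have wx_le : w x <= w y.
  apply: (w_incr I) => // t It; have /andP[_ v_hi] := v_bounds t (t0 t It).
  by have := w_lt_v t It; lra.
by lra.
Qed.

Lemma solution_le t : 0 <= t -> v t <= w t.
Proof.
have [[v_cont _] v0 _ _ _] := v_sol; have [[w_cont _] w0 _ _ _] := w_sol.
move=> t0; rewrite leNgt; apply/negP => wt_lt_vt.
pose g r := v r - w r.
have g_cont : eps_continuous `[0, +oo[ g by apply: eps_continuousB; apply/eps_continuousP.
have g0 : g 0 <= 0 by rewrite /g v0 w0 subrr.
have gt_pos : 0 < g t by rewrite /g subr_gt0.
have [s [s0 st gs_le0 g_pos]] := last_nonpositive_time g_cont t0 g0 gt_pos.
suff : g t <= g s by lra.
apply: (ge_right_limit g_cont s0 st) => r /andP[sr rt].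
apply: (solution_gap_nonincreasing (I := `]s, t]%classic)) => //.
- by move=> u /=; rewrite in_itv /= => /andP[su _]; apply/in_itvcyP; lra.
- exact: interval_is_interval.
- by move=> u /= /[!in_itv] /= /g_pos; rewrite subr_gt0.
- by rewrite /= in_itv /= sr rt.
- by rewrite /= in_itv /= lexx andbT; lra.
Qed.

End Uniqueness.

Unset Implicit Arguments.

Theorem proposition2p1 (d : measure_display) (Ω : measurableType d)
  (R : realType) (P : probability Ω R) (B : R -> Ω -> R) (c : R) :
  brownian_motion P B -> 0 < c ->
  (forall m : nat, {ae P, forall w, (Tseq (fun t => B t w) c m < +oo)%E}) ->
  {ae P, forall w,
     is_solution (fun t => B t w) c (Upath (fun t => B t w) c) /\
     (forall v : R -> R, is_solution (fun t => B t w) c v ->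
        forall t, 0 <= t -> v t = Upath (fun t => B t w) c t)}.
Proof.
move=> [_ B_cont B0 _] c_gt0 T_finite.
have T_finite_all := ae_foralln (P := fun m w => (Tseq (fun t => B t w) c m < +oo)%E) T_finite.
apply: (filterS3 _ _ B_cont B0 T_finite_all) => w Bw_cont Bw0 Tw_finite.
have U_sol := Upath_solution c_gt0 (proj1 (eps_continuousP _ _) Bw_cont) Bw0 Tw_finite.
split => // v v_sol t t0.
by apply: le_anti; rewrite (solution_le v_sol U_sol) ?(solution_le U_sol v_sol).
Qed.
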